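(* Let $E$ be a directed graph, $R$ a unital ring, $X\subseteq\mathrm{Reg}(E)$, $B=M(G,I)$ a Brandt groupoid, $S=B\cup\{0\}$ the associated Brandt semigroup, and $w$ a weight mapping. Then $C_R^X(E)=\bigoplus_{s\in S}(C_R^X(E))_s$ is an $S$-graded ring inducing $S$ which admits an anti-graded involution. In particular $L_R(E)=C_R^{\mathrm{Reg}(E)}(E)$ is an $S$-graded ring with an anti-graded involution.
   Context: Directed graph $E=(E^0,E^1,\mathrm{r},\mathrm{s})$, paths $E^*$ (including vertices as length-$0$ paths), regular vertices $\mathrm{Reg}(E)$ (vertices $v$ with $\mathrm{s}^{-1}(v)$ nonempty and finite). For unital $R$ and $X\subseteq\mathrm{Reg}(E)$, the Cohn path algebra $C_R^X(E)$ is the $R$-algebra generated by $E^0$, $E^1$, $\{\alpha^*:\alpha\in E^1\}$ (with $R$ commuting with generators) subject to $vv'=\delta_{v,v'}v$; $\mathrm{s}(\alpha)\alpha=\alpha\mathrm{r}(\alpha)=\alpha$, $\mathrm{r}(\alpha)\alpha^*=\alpha^*\mathrm{s}(\alpha)=\alpha^*$; $\alpha^*\alpha'=\delta_{\alpha,\alpha'}\mathrm{r}(\alpha)$; $\sum_{\mathrm{s}(\alpha)=v}\alpha\alpha^*=v$ for $v\in X$; $L_R(E)=C_R^{\mathrm{Reg}(E)}(E)$. For $\mu=\alpha_1\cdots\alpha_k$, $\mu^*=\alpha_k^*\cdots\alpha_1^*$, $v^*=v$. Brandt groupoid: for a group $G$ and a set $I$, $M(G,I)=I\times G\times I$ with partial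 product $(i,g,j)(k,h,l)=(i,gh,l)$ if $j=k$, undefined otherwise. $S=B\cup\{0\}$, undefined products set to $0$, $0$ absorbing; $I(B)$ denotes the idempotents of $B$ (elements $(i,1_G,i)$); $(i,g,j)^{-1}=(j,g^{-1},i)$, $0^{-1}=0$. Weight mapping: a map $w$ with $w(E^0)\subseteq I(B)$, $w(E^1)\subseteq B$, $w(\alpha^* )=w(\alpha)^{-1}$, and $w(\mathrm{s}(\alpha))w(\alpha)=w(\alpha)=w(\alpha)w(\mathrm{r}(\alpha))$ for all $\alpha\in E^1$; extended multiplicatively: $w(\alpha_1\cdots\alpha_k)=w(\alpha_1)\cdots w(\alpha_k)$, $w(\mu\eta^* )=w(\mu)w(\eta)^{-1}$. For $s\in B$, $(C_R^X(E))_s$ is the $R$-linear span of monomials $\mu\eta^*$ ($\mu,\eta\in E^*$, $\mathrm{r}(\mu)=\mathrm{r}(\eta)$) with $w(\mu\eta^* )=s$; $(C_R^X(E))_0=\{0\}$. $S$-graded ring inducing $S$: $R'=\bigoplus_{s\in S}R'_s$ (direct sum of additive subgroups) with $R'_sR'_t\subseteq R'_{st}$ whenever $st$ is defined and $R'_sR'_t\ne0$ only if $st$ is defined (here in $S$ with zero, $R'_0=0$). An anti-graded involution is a map $^*:R'\to R'$ with $(x^* )^*=x$ for all $x$ and $(R'_s)^*=R'_{s^{-1}}$ for all $s\in S$. *)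

From HB Require Import structures.
From mathcomp Require Import all_boot all_algebra.
From Stdlib Require Import ClassicalEpsilon.
From Stdlib Require List.

Set Implicit Arguments.
Unset Strict Implicit.
Unset Printing Implicit Defensive.

Import GRing.Theory.
Local Open Scope ring_scope.

Record group_on (G : Type) := GroupOn {
  gmul : G -> G -> G;
  gone : G;
  ginv : G -> G;
  gmulA : forall x y z, gmul x (gmul y z) = gmul (gmul x y) z;
  gmul1g : forall x, gmul gone x = x;
  gmulVg : forall x, gmul (ginv x) x = gone }.

(* Brandt groupoid B = M(G,I) = I x G x I; the Brandt semigroup
   S = B u {0} is  option B  with 0 = None. *)
Section Brandt.
Variables (I G : Type) (gG : group_on G).

Definition bmul (a b : option (I * G * I)) : option (I * G * I) :=
  match a, b with
  | Some (i, g, j), Some (k, h, l) =>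
      if excluded_middle_informative (j = k) then Some (i, gmul gG g h, l)
      else None
  | _, _ => None
  end.

Definition binv (a : option (I * G * I)) : option (I * G * I) :=
  match a with
  | Some (i, g, j) => Some (j, ginv gG g, i)
  | None => None
  end.

Definition is_idem (b : I * G * I) : Prop := bmul (Some b) (Some b) = Some b.
End Brandt.

Section Graph.
Variables (V Ed : Type) (src rng : Ed -> V).

(* regular vertices: s^{-1}(v) nonempty and finite *)
Definition regular (v : V) : Prop :=
  exists l : seq Ed, l <> [::] /\ List.NoDup l /\
    forall a, List.In a l <-> src a = v.

(* paths: (v, l) with l a sequence of edges starting at v
   (l = [::] is the length-0 path v) *)
Fixpoint path_from (v : V) (l : seq Ed) : Prop :=
  match l with
  | [::] => True
  | a :: l' => src a = v /\ path_from (rng a) l'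
  end.

Fixpoint path_rng (v : V) (l : seq Ed) : V :=
  match l with
  | [::] => v
  | a :: l' => path_rng (rng a) l'
  end.

(* generators of the Cohn path algebra: vertices, edges, ghost edges *)
Inductive gen := Gv of V | Ge of Ed | Gs of Ed.

(* nonempty words in the generators (the algebra is non-unital) *)
Definition word := (gen * seq gen)%type.
Definition wcat (u w : word) : word := (u.1, u.2 ++ w.1 :: w.2).
Definition gw (g : gen) : word := (g, [::]).
Definition w2 (g h : gen) : word := (g, [:: h]).

(* word of the monomial mu eta-star, mu = (v,l), eta = (v',l') *)
Definition mono_word (v : V) (l : seq Ed) (v' : V) (l' : seq Ed) : word :=
  match [seq Ge a | a <- l] ++ [seq Gs a | a <- rev l'] with
  | [::] => gw (Gv v)
  | g :: gs => (g, gs)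
  end.

Variable R : pzRingType.

(* The free (non-unital) R-algebra on the generators, with R commuting
   with the generators: formal sums  sum r_i w_i  (w_i nonempty words). *)
Definition fsum := seq (R * word).

Definition fscale_l (r : R) (x : fsum) : fsum := [seq (r * p.1, p.2) | p <- x].
Definition fscale_r (r : R) (x : fsum) : fsum := [seq (p.1 * r, p.2) | p <- x].
Definition fmul (x y : fsum) : fsum :=
  [seq (p.1 * q.1, wcat p.2 q.2) | p <- x, q <- y].
(* coefficient of the word w in x (equality in the free algebra) *)
Definition coef (x : fsum) (w : word) : R :=
  \sum_(p <- x) (if excluded_middle_informative (p.2 = w) then p.1 else 0).

Variable X : V -> Prop.

Inductive crel : fsum -> Prop :=
  | rel_vv v : crel [:: (1, w2 (Gv v) (Gv v)); (-1, gw (Gv v))]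
  | rel_vv' v v' : v <> v' -> crel [:: (1, w2 (Gv v) (Gv v'))]
  | rel_se a : crel [:: (1, w2 (Gv (src a)) (Ge a)); (-1, gw (Ge a))]
  | rel_er a : crel [:: (1, w2 (Ge a) (Gv (rng a))); (-1, gw (Ge a))]
  | rel_rs a : crel [:: (1, w2 (Gv (rng a)) (Gs a)); (-1, gw (Gs a))]
  | rel_ss a : crel [:: (1, w2 (Gs a) (Gv (src a))); (-1, gw (Gs a))]
  | rel_ce a : crel [:: (1, w2 (Gs a) (Ge a)); (-1, gw (Gv (rng a)))]
  | rel_ce' a a' : a <> a' -> crel [:: (1, w2 (Gs a) (Ge a'))]
  | rel_ck v (l : seq Ed) : X v -> List.NoDup l ->
      (forall a, List.In a l <-> src a = v) ->
      crel ([seq (1, w2 (Ge a) (Gs a)) | a <- l] ++ [:: (-1, gw (Gv v))]).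

(* the (two-sided, R-stable) ideal generated by the relations,
   as a set of representatives in the free algebra *)
Inductive cideal : fsum -> Prop :=
  | ci_rel x : crel x -> cideal x
  | ci_nil : cideal [::]
  | ci_add x y : cideal x -> cideal y -> cideal (x ++ y)
  | ci_lmul a x : cideal x -> cideal (fmul a x)
  | ci_rmul x a : cideal x -> cideal (fmul x a)
  | ci_lsc r x : cideal x -> cideal (fscale_l r x)
  | ci_rsc r x : cideal x -> cideal (fscale_r r x)
  | ci_free x y : (forall w, coef x w = coef y w) -> cideal x -> cideal y.

(* equality in C_R^X(E) = free algebra / cideal *)
Definition ceq (x y : fsum) : Prop := cideal (x ++ fscale_l (-1) y).

Variables (I G : Type) (gG : group_on G).
Variables (wv : V -> I * G * I) (we : Ed -> I * G * I).

Definition weight_mapping : Prop :=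
  (forall v, is_idem gG (wv v)) /\
  (forall a, bmul gG (Some (wv (src a))) (Some (we a)) = Some (we a) /\
             bmul gG (Some (we a)) (Some (wv (rng a))) = Some (we a)).

Definition wpath (v : V) (l : seq Ed) : option (I * G * I) :=
  match l with
  | [::] => Some (wv v)
  | a :: l' => foldl (fun acc e => bmul gG acc (Some (we e))) (Some (we a)) l'
  end.

Definition wmono v l v' l' : option (I * G * I) :=
  bmul gG (wpath v l) (binv gG (wpath v' l')).

Definition span_w (s : I * G * I) (x : fsum) : Prop :=
  List.Forall (fun p => exists v l v' l',
      path_from v l /\ path_from v' l' /\ path_rng v l = path_rng v' l' /\
      p.2 = mono_word v l v' l' /\ wmono v l v' l' = Some s) x.

(* the homogeneous component (C_R^X(E))_t, t in S, as a set of
   representatives; (C_R^X(E))_0 = {0} *)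
Definition comp (t : option (I * G * I)) (x : fsum) : Prop :=
  match t with
  | None => cideal x
  | Some s => exists y, span_w s y /\ ceq x y
  end.

Definition graded_ring_inducing : Prop :=
  (forall t, comp t [::] /\
     (forall x y, comp t x -> comp t y -> comp t (x ++ y)) /\
     (forall x, comp t x -> comp t (fscale_l (-1) x))) /\
  (forall x, exists l : seq ((I * G * I) * fsum),
     List.Forall (fun p => comp (Some p.1) p.2) l /\
     ceq x (flatten [seq p.2 | p <- l])) /\
  (forall l : seq ((I * G * I) * fsum),
     List.NoDup [seq p.1 | p <- l] ->
     List.Forall (fun p => comp (Some p.1) p.2) l ->
     cideal (flatten [seq p.2 | p <- l]) ->
     List.Forall (fun p => cideal p.2) l) /\
  (* C_s C_t inside C_{st} (st = 0 in S exactly when undefined in B) *)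
  (forall s t x y, comp s x -> comp t y -> comp (bmul gG s t) (fmul x y)).

(* an anti-graded involution on C_R^X(E) (a map on the quotient,
   given by a representative-respecting map on the free algebra) *)
Definition has_anti_graded_involution : Prop :=
  exists f : fsum -> fsum,
    (forall x y, ceq x y -> ceq (f x) (f y)) /\
    (forall x, ceq (f (f x)) x) /\
    (forall t x, comp t x -> comp (binv gG t) (f x)) /\
    (forall t x, comp (binv gG t) x -> exists y, comp t y /\ ceq (f y) x).

End Graph.

(* Every generator of C^X_R(E) gets a weight in the Brandt semigroup S: w(v), w(a) and
   w(a)^-1.  Each defining relation is a combination of words of a single weight, so the
   operation keeping only the words of a prescribed weight maps the ideal of relations into
   itself.  Hence a sum of words of pairwise distinct weights vanishes in C^X_R(E) only if
   each of its homogeneous parts does, which makes the sum of the components direct.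
   Modulo the relations every word is either 0 or a monomial mu eta^*, and when it is
   nonzero its weight is that of the monomial; this gives spanning and C_s C_t <= C_st.
   Reversing words and exchanging a with a^* preserves the relations and inverts weights,
   which gives the anti-graded involution. *)

From Pilot Require Import Defs.
From mathcomp Require Import all_boot all_algebra.
From Stdlib Require Import ClassicalEpsilon.
From Stdlib Require List.

Set Implicit Arguments.
Unset Strict Implicit.
Unset Printing Implicit Defensive.

Import GRing.Theory.
Local Open Scope ring_scope.
Local Arguments Defs.bmul : simpl never.

Definition asbool (P : Prop) : bool := if excluded_middle_informative P then true else false.

Lemma asboolP (P : Prop) : reflect P (asbool P).
Proof. by rewrite /asbool; case: excluded_middle_informative => p; constructor. Qed.

Section GroupOn.
Variables (G : Type) (gG : group_on G).
Local Notation "x * y" := (gmul gG x y).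
Local Notation "1" := (gone gG).
Local Notation "x ^-1" := (ginv gG x).

Lemma gmulgV x : x * x^-1 = 1.
Proof.
rewrite -(gmul1g gG (x * x^-1)) -(gmulVg gG x^-1) -(gmulA gG) (gmulA gG x^-1).
by rewrite (gmulVg gG x) (gmul1g gG) (gmulVg gG).
Qed.

Lemma gmulg1 x : x * 1 = x.
Proof. by rewrite -(gmulVg gG x) (gmulA gG) gmulgV (gmul1g gG). Qed.

Lemma gmul_idPr x y : x * y = x -> y = 1.
Proof. by move=> xy; rewrite -[y](gmul1g gG) -(gmulVg gG x) -(gmulA gG) xy. Qed.

Lemma gmul_idPl x y : x * y = y -> x = 1.
Proof. by move=> xy; rewrite -[x]gmulg1 -(gmulgV y) (gmulA gG) xy. Qed.

Lemma ginvK x : (x^-1)^-1 = x.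
Proof. by rewrite -[RHS](gmul1g gG) -(gmulVg gG x^-1) -(gmulA gG) (gmulVg gG) gmulg1. Qed.

Lemma ginv_unique x y : x * y = 1 -> x^-1 = y.
Proof. by move=> xy; rewrite -[LHS]gmulg1 -xy (gmulA gG) (gmulVg gG) (gmul1g gG). Qed.

Lemma ginvM x y : (x * y)^-1 = y^-1 * x^-1.
Proof. by apply: ginv_unique; rewrite -(gmulA gG) (gmulA gG y) gmulgV (gmul1g gG) gmulgV. Qed.

Lemma ginv1 : 1^-1 = 1.
Proof. by rewrite -[LHS](gmul1g gG) gmulgV. Qed.

End GroupOn.

Section Brandt.
Variables (I G : Type) (gG : group_on G).
Local Notation B := (I * G * I)%type.
Local Notation bmul := (bmul gG).
Local Notation binv := (binv gG).
Local Notation emi := excluded_middle_informative.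
Implicit Types (i j k l : I) (g h : G) (a b c : option B) (x y e : B).

Lemma bmulE i g j h l : bmul (Some (i, g, j)) (Some (j, h, l)) = Some (i, gmul gG g h, l).
Proof. by rewrite /Defs.bmul; case: emi. Qed.

Lemma bmulN i g j k h l : j <> k -> bmul (Some (i, g, j)) (Some (k, h, l)) = None.
Proof. by move=> jk; rewrite /Defs.bmul; case: emi. Qed.

Lemma bmul0r a : bmul a None = None.
Proof. by case: a => [[[]]|]. Qed.

Lemma bmulA a b c : bmul (bmul a b) c = bmul a (bmul b c).
Proof.
case: a => [[[i g] j]|] //; case: b => [[[k h] l]|]; last by rewrite !bmul0r.
case: c => [[[m n] o]|]; last by rewrite !bmul0r.
have [<-|jk] := emi (j = k); last first.
  rewrite (bmulN _ _ _ _ jk).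
  have [<-|lm] := emi (l = m); last by rewrite (bmulN _ _ _ _ lm) bmul0r.
  by rewrite bmulE bmulN.
rewrite bmulE; have [<-|lm] := emi (l = m); last by rewrite !(bmulN _ _ _ _ lm) bmul0r.
by rewrite !bmulE gmulA.
Qed.

Definition sinv x : B := let: (i, g, j) := x in (j, ginv gG g, i).

Lemma binv_Some x : binv (Some x) = Some (sinv x).
Proof. by case: x => [[]]. Qed.

Lemma sinvK : involutive sinv.
Proof. by case=> [[i g] j] /=; rewrite ginvK. Qed.

Lemma binvK a : binv (binv a) = a.
Proof. by case: a => [x|] //; rewrite !binv_Some sinvK. Qed.

Lemma binvM a b : binv (bmul a b) = bmul (binv b) (binv a).
Proof.
case: a => [[[i g] j]|]; last by rewrite bmul0r.
case: b => [[[k h] l]|] //.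
have [<-|jk] := emi (j = k); last by rewrite !bmulN // => kj; apply: jk.
by rewrite bmulE !binv_Some /sinv bmulE ginvM.
Qed.

Lemma bmul_idr x e : bmul (Some x) (Some e) = Some x -> e = (x.2, gone gG, x.2).
Proof.
case: x e => [[i g] j] [[k h] l].
have [<-|jk] := emi (j = k); last by rewrite bmulN.
by rewrite bmulE => -[xh ->]; rewrite (gmul_idPr xh).
Qed.

Lemma bmul_idl x e : bmul (Some e) (Some x) = Some x -> e = (x.1.1, gone gG, x.1.1).
Proof.
case: x e => [[i g] j] [[k h] l].
have [<-|li] := emi (l = i); last by rewrite bmulN.
by rewrite bmulE => -[-> hx]; rewrite (gmul_idPl hx).
Qed.

Lemma bmul_idem_sinv e : bmul (Some e) (Some e) = Some e -> sinv e = e.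
Proof. by move=> /bmul_idr ->; rewrite /= ginv1. Qed.

Lemma bmul_sinvl x e : bmul (Some x) (Some e) = Some x -> bmul (Some (sinv x)) (Some x) = Some e.
Proof. by case: x => [[i g] j] /bmul_idr ->; rewrite /= bmulE gmulVg. Qed.

Lemma bmul_sinvr x e : bmul (Some e) (Some x) = Some x -> bmul (Some x) (Some (sinv x)) = Some e.
Proof. by case: x => [[i g] j] /bmul_idl ->; rewrite /= bmulE gmulgV. Qed.

Lemma bmul_Some x e y : bmul (Some x) (Some e) = Some x -> bmul (Some e) (Some y) = Some y ->
  exists z, bmul (Some x) (Some y) = Some z.
Proof.
case: x y => [[i g] j] [[k h] l] /bmul_idr -> /bmul_idl [<-].
by rewrite bmulE; eexists.
Qed.

End Brandt.

Section FreeAlgebra.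
Variables (V Ed : Type) (src rng : Ed -> V) (R : pzRingType) (X : V -> Prop).
Local Notation F := (fsum V Ed R).
Local Notation ideal := (@cideal V Ed src rng R X).
Local Notation "x =C y" := (@ceq V Ed src rng R X x y) (at level 70).
Local Notation emi := excluded_middle_informative.
Implicit Types (x y z a : F) (r : R) (w : word V Ed).

Lemma coef_nil w : coef ([::] : F) w = 0.
Proof. by rewrite /coef big_nil. Qed.

Lemma coef_cat x y w : coef (x ++ y) w = coef x w + coef y w.
Proof. by rewrite /coef big_cat. Qed.

Lemma coef_scale_l r x w : coef (fscale_l r x) w = r * coef x w.
Proof.
rewrite /coef big_map mulr_sumr; apply: eq_bigr => p _ /=.
by case: emi => ?; rewrite ?mulr0.
Qed.

Lemma coef_fmul x y w : coef (fmul x y) w =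
  \sum_(p <- x) \sum_(q <- y) (if emi (wcat p.2 q.2 = w) then p.1 * q.1 else 0).
Proof. by rewrite /coef big_allpairs_dep. Qed.

Lemma coef_opp x w : coef (fscale_l (-1) x) w = - coef x w.
Proof. by rewrite coef_scale_l mulN1r. Qed.

Lemma cideal_coef x y : ideal x -> (forall w, coef x w = coef y w) -> ideal y.
Proof. by move=> Ix xy; apply: ci_free Ix. Qed.

Lemma ceq_refl x : x =C x.
Proof.
by apply: (cideal_coef (@ci_nil _ _ src rng R X)) => w; rewrite coef_nil coef_cat coef_opp subrr.
Qed.

Lemma ceq_sym x y : x =C y -> y =C x.
Proof.
move=> Ixy; apply: (cideal_coef (ci_lsc (-1) Ixy)) => w.
by rewrite !(coef_opp, coef_cat) opprD opprK addrC.
Qed.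

Lemma ceq_trans x y z : x =C y -> y =C z -> x =C z.
Proof.
move=> Ixy Iyz; apply: (cideal_coef (ci_add Ixy Iyz)) => w.
by rewrite !(coef_opp, coef_cat) addrA subrK.
Qed.

Lemma ceq_cat x x' y y' : x =C x' -> y =C y' -> x ++ y =C x' ++ y'.
Proof.
move=> Ix Iy; apply: (cideal_coef (ci_add Ix Iy)) => w.
by rewrite !(coef_opp, coef_cat) opprD addrACA.
Qed.

Lemma ceq0 x : (x =C [::]) <-> ideal x.
Proof.
by split=> Ix; apply: (cideal_coef Ix) => w; rewrite !(coef_opp, coef_cat) coef_nil oppr0 addr0.
Qed.

Lemma cideal_ceq x y : x =C y -> ideal y -> ideal x.
Proof.
move=> Ixy Iy; apply: (cideal_coef (ci_add Ixy Iy)) => w.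
by rewrite !(coef_opp, coef_cat) subrK.
Qed.

Lemma ceq_scale_l r x y : x =C y -> fscale_l r x =C fscale_l r y.
Proof.
move=> Ixy; apply: (cideal_coef (ci_lsc r Ixy)) => w.
by rewrite !(coef_scale_l, coef_cat) mulrDr !mulN1r mulrN.
Qed.

Lemma ceq_fmul_l a x y : x =C y -> fmul a x =C fmul a y.
Proof.
move=> Ixy; apply: (cideal_coef (ci_lmul a Ixy)) => w.
rewrite coef_cat coef_opp !coef_fmul -sumrN -big_split /=.
apply: eq_bigr => p _; rewrite big_cat /= -sumrN big_map; congr (_ + _).
by apply: eq_bigr => q _ /=; case: emi => ?; rewrite ?oppr0 // mulN1r mulrN.
Qed.

Lemma ceq_fmul_r a x y : x =C y -> fmul x a =C fmul y a.
Proof.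
move=> Ixy; apply: (cideal_coef (ci_rmul a Ixy)) => w.
rewrite coef_cat coef_opp !coef_fmul big_cat /= big_map -sumrN; congr (_ + _).
apply: eq_bigr => p _ /=; rewrite -sumrN; apply: eq_bigr => q _.
by case: emi => ?; rewrite ?oppr0 // mulN1r mulNr.
Qed.

Lemma ceq_fmul x x' y y' : x =C x' -> y =C y' -> fmul x y =C fmul x' y'.
Proof. by move=> /(ceq_fmul_r y) xx' /(ceq_fmul_l x') yy'; apply: ceq_trans xx' yy'. Qed.

Lemma fmul1l p y : fmul [:: p] y = [seq (p.1 * q.1, wcat p.2 q.2) | q <- y].
Proof. by rewrite /fmul /= cats0. Qed.

Lemma fmul1r x q : fmul x [:: q] = [seq (p.1 * q.1, wcat p.2 q.2) | p <- x].
Proof. by rewrite /fmul allpairs1r. Qed.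

Lemma fmul_consl p x y : fmul (p :: x) y = fmul [:: p] y ++ fmul x y.
Proof. by rewrite /fmul /= cats0. Qed.

Lemma coef_fmul_consr x q y w : coef (fmul x (q :: y)) w = coef (fmul x [:: q] ++ fmul x y) w.
Proof.
rewrite coef_cat !coef_fmul -big_split /=; apply: eq_bigr => p _.
by rewrite !big_cons big_nil addr0.
Qed.

Lemma fmul0r x : fmul x ([::] : F) = [::].
Proof. by elim: x. Qed.

Lemma cideal_ind1 (P : F -> Prop) :
  (forall x, crel src rng X x -> P x) -> P [::] ->
  (forall x y, P x -> P y -> P (x ++ y)) ->
  (forall p y, P y -> P (fmul [:: p] y)) ->
  (forall x q, P x -> P (fmul x [:: q])) ->
  (forall r x, P x -> P (fscale_l r x)) ->
  (forall r x, P x -> P (fscale_r r x)) ->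
  (forall x y, (forall w, coef x w = coef y w) -> P x -> P y) ->
  forall x, ideal x -> P x.
Proof.
move=> Prel Pnil Pcat Pmull Pmulr Psl Psr Pcoef x.
elim=> {x} [x /Prel //|//|x y _ Px _ Py|a y _ Py|x a _ Px|r x _ Px|r x _ Px|x y xy _ Px].
- exact: Pcat.
- elim: a => [//|p a IHa].
  by rewrite fmul_consl; apply: Pcat => //; apply: Pmull.
- elim: a => [|q a IHa]; first by rewrite fmul0r.
  apply: (Pcoef _ _ (fun w => esym (coef_fmul_consr x q a w))).
  by apply: Pcat => //; apply: Pmulr.
- exact: Psl.
- exact: Psr.
- exact: Pcoef xy Px.
Qed.

End FreeAlgebra.

Section Words.
Variables (V Ed : Type) (src rng : Ed -> V) (R : pzRingType) (X : V -> Prop).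
Local Notation gen := (gen V Ed).
Local Notation word := (word V Ed).
Local Notation F := (fsum V Ed R).
Local Notation ideal := (@cideal V Ed src rng R X).
Local Notation rel := (@crel V Ed src rng R X).
Local Notation "x =C y" := (@ceq V Ed src rng R X x y) (at level 70).
Implicit Types (x y : F) (g h : gen) (u w : word) (v : V) (a : Ed) (l : seq Ed).

Definition gsrc g : V := match g with Gv v => v | Ge a => src a | Gs a => rng a end.
Definition grng g : V := match g with Gv v => v | Ge a => rng a | Gs a => src a end.
Definition gstar g : gen := match g with Gv v => Gv Ed v | Ge a => Gs V a | Gs a => Ge V a end.

Local Notation Gv := (@Gv V Ed).
Local Notation Ge := (@Ge V Ed).
Local Notation Gs := (@Gs V Ed).

Definition wseq w : seq gen := w.1 :: w.2.
Definition wstar w : word :=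
  let s := rev (map gstar (wseq w)) in (head w.1 s, behead s).

Lemma gstarK : involutive gstar.
Proof. by case. Qed.

Lemma wseq_inj : injective wseq.
Proof. by case=> [g s] [h t] [-> ->]. Qed.

Lemma wseq_wcat u w : wseq (wcat u w) = wseq u ++ wseq w.
Proof. by []. Qed.

Lemma wseq_wstar w : wseq (wstar w) = rev (map gstar (wseq w)).
Proof.
rewrite /wstar; case E: (rev _) => [|h t] //.
by have := congr1 size E; rewrite size_rev.
Qed.

Lemma wstarK w : wstar (wstar w) = w.
Proof. by apply: wseq_inj; rewrite !wseq_wstar map_rev revK (mapK gstarK). Qed.

Lemma wstar_cat u w : wstar (wcat u w) = wcat (wstar w) (wstar u).
Proof. by apply: wseq_inj; rewrite wseq_wcat !wseq_wstar wseq_wcat map_cat rev_cat. Qed.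

Definition fstar x : F := [seq (p.1, wstar p.2) | p <- x].

Lemma coef_fstar x w : coef (fstar x) w = coef x (wstar w).
Proof.
rewrite /coef big_map; apply: eq_bigr => p _ /=.
have wE : wstar p.2 = w <-> p.2 = wstar w by split=> [<-|->]; rewrite wstarK.
case: (excluded_middle_informative (wstar p.2 = w)) => [e1|n1];
  case: (excluded_middle_informative (p.2 = wstar w)) => [e2|n2] //=.
- by case: (n2 (wE.1 e1)).
- by case: (n1 (wE.2 e2)).
Qed.

Lemma fstarK x : fstar (fstar x) = x.
Proof. by rewrite /fstar -map_comp -[RHS]map_id; apply: eq_map => -[r w] /=; rewrite wstarK. Qed.

Lemma crel_fstar x : rel x -> rel (fstar x).
Proof.
case=> [v|v v' vv'|a|a|a|a|a|a a' aa'|v l Xv uniql srcl]; rewrite /fstar /=.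
- exact: rel_vv.
- by apply: rel_vv' => v'v; apply: vv'.
- exact: rel_ss.
- exact: rel_rs.
- exact: rel_er.
- exact: rel_se.
- exact: rel_ce.
- by apply: rel_ce' => a'a; apply: aa'.
- by rewrite map_cat -map_comp; apply: rel_ck.
Qed.

Lemma cideal_fstar x : ideal x -> ideal (fstar x).
Proof.
move: x; apply: (@cideal_ind1 _ _ src rng R X (fun x => ideal (fstar x))).
- by move=> x /crel_fstar; apply: ci_rel.
- exact: ci_nil.
- by move=> x y Ix Iy; rewrite /fstar map_cat; apply: ci_add.
- move=> p y Iy; have := ci_lsc p.1 (ci_rmul [:: (1, wstar p.2)] Iy).
  rewrite fmul1l fmul1r /fstar /fscale_l -!map_comp; congr (cideal _ _ _ _).
  by apply: eq_map => q /=; rewrite mulr1 wstar_cat.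
- move=> x q Ix; have := ci_rsc q.1 (ci_lmul [:: (1, wstar q.2)] Ix).
  rewrite fmul1l fmul1r /fstar /fscale_r -!map_comp; congr (cideal _ _ _ _).
  by apply: eq_map => p /=; rewrite mul1r wstar_cat.
- by move=> r x /(ci_lsc r); rewrite /fstar /fscale_l -!map_comp.
- by move=> r x /(ci_rsc r); rewrite /fstar /fscale_r -!map_comp.
- by move=> x y xy Ix; apply: (cideal_coef Ix) => w; rewrite !coef_fstar xy.
Qed.

Lemma ceq_fstar x y : x =C y -> fstar x =C fstar y.
Proof. by move=> /cideal_fstar; rewrite /ceq /fstar /fscale_l map_cat -!map_comp. Qed.

Definition wzero w : Prop := ideal [:: (1, w)].
Definition weq u w : Prop := [:: (1, u)] =C [:: (1, w)].

Lemma weq_refl w : weq w w. Proof. exact: ceq_refl. Qed.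
Lemma weq_sym u w : weq u w -> weq w u. Proof. exact: ceq_sym. Qed.
Lemma weq_trans u w z : weq u w -> weq w z -> weq u z. Proof. exact: ceq_trans. Qed.
Lemma wzero_weq u w : weq u w -> wzero w -> wzero u. Proof. exact: cideal_ceq. Qed.

Lemma weq_rel u w : rel [:: (1, u); (-1, w)] -> weq u w.
Proof. by move=> /ci_rel; rewrite /weq /ceq /fscale_l /= mulr1. Qed.

Lemma wzero_rel w : rel [:: (1, w)] -> wzero w.
Proof. exact: ci_rel. Qed.

Lemma weq_catl u w w' : weq w w' -> weq (wcat u w) (wcat u w').
Proof. by move=> /(ceq_fmul_l [:: (1, u)]); rewrite /weq !fmul1l /= mulr1. Qed.

Lemma weq_catr u w w' : weq w w' -> weq (wcat w u) (wcat w' u).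
Proof. by move=> /(ceq_fmul_r [:: (1, u)]); rewrite /weq !fmul1r /= mulr1. Qed.

Lemma wzero_catl u w : wzero w -> wzero (wcat u w).
Proof. by move=> /(ci_lmul [:: (1, u)]); rewrite /wzero fmul1l /= mulr1. Qed.

Lemma wzero_catr u w : wzero w -> wzero (wcat w u).
Proof. by move=> /(ci_rmul [:: (1, u)]); rewrite /wzero fmul1r /= mulr1. Qed.

Lemma weq_cats g s g' s' t : weq (g, s) (g', s') -> weq (g, s ++ t) (g', s' ++ t).
Proof. by case: t => [|h t]; [rewrite !cats0 | exact: (weq_catr (h, t))]. Qed.

Lemma wzero_cats g s t : wzero (g, s) -> wzero (g, s ++ t).
Proof. by case: t => [|h t]; [rewrite cats0 | exact: (wzero_catr (h, t))]. Qed.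

Lemma wzero_scale r w : wzero w -> ideal [:: (r, w)].
Proof. by move=> /(ci_lsc r); rewrite /fscale_l /= mulr1. Qed.

Lemma weq_scale r u w : weq u w -> [:: (r, u)] =C [:: (r, w)].
Proof. by move=> /(ceq_scale_l r); rewrite /fscale_l /= !mulr1. Qed.

Lemma weq_vertexl g : weq (Gv (gsrc g), [:: g]) (g, [::]).
Proof. by apply: weq_rel; case: g => [v|a|a]; [apply: rel_vv | apply: rel_se | apply: rel_rs]. Qed.

Lemma weq_vertexr g : weq (g, [:: Gv (grng g)]) (g, [::]).
Proof. by apply: weq_rel; case: g => [v|a|a]; [apply: rel_vv | apply: rel_er | apply: rel_ss]. Qed.

Lemma wzero_mismatch g h : grng g <> gsrc h -> wzero (g, [:: h]).
Proof.
move=> gh; pose vg := Gv (grng g); pose vh := Gv (gsrc h).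
apply: (@wzero_weq _ (g, [:: vg; vh; h])).
  apply: weq_trans (weq_cats [:: h] (weq_sym (weq_vertexr g))) _.
  exact: (weq_catl (g, [:: vg]) (weq_sym (weq_vertexl h))).
have vgh : wzero (vg, [:: vh]) by apply/wzero_rel/rel_vv'.
exact: (wzero_catl (g, [::]) (wzero_cats [:: h] vgh)).
Qed.

Lemma path_rng_rcons v l a : path_rng rng v (rcons l a) = rng a.
Proof. by elim: l v => //= b l IH v. Qed.

Lemma path_from_rcons v l a :
  path_from src rng v (rcons l a) <-> path_from src rng v l /\ src a = path_rng rng v l.
Proof. by elim: l v => [|b l IH] v /=; [tauto | rewrite IH; tauto]. Qed.

Definition path_pair v l v' l' : Prop :=
  [/\ path_from src rng v l, path_from src rng v' l' & path_rng rng v l = path_rng rng v' l'].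

(* [(Gv v, mono_gens l l')] is the monomial mu eta^* for mu = (v, l), eta = (v', l'),
   preceded by its source vertex v; unlike [mono_word], it needs no special case when
   both paths have length 0. *)
Definition mono_gens l l' : seq gen := [seq Ge a | a <- l] ++ [seq Gs a | a <- rev l'].

Lemma mono_gens_head v l v' l' h t :
  path_pair v l v' l' -> mono_gens l l' = h :: t -> gsrc h = v.
Proof.
case: l => [|a l] [vl v'l' vv'] /=; last by case=> <- _; case: vl.
case/lastP: l' v'l' vv' => [|l' c] //= _; rewrite path_rng_rcons => ->.
by rewrite /mono_gens rev_rcons => -[<- _].
Qed.

Lemma grng_last_path v l : grng (last (Gv v) [seq Ge a | a <- l]) = path_rng rng v l.
Proof. by case/lastP: l => [|l a] //; rewrite map_rcons last_rcons path_rng_rcons. Qed.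

Lemma mono_gens_last v l v' l' :
  path_pair v l v' l' -> grng (last (Gv v) (mono_gens l l')) = v'.
Proof.
case: l' => [|c l'] [vl v'l' vv']; first by rewrite /mono_gens cats0 grng_last_path.
by rewrite /mono_gens rev_cons map_rcons last_cat last_rcons; case: v'l'.
Qed.

Lemma wseq_mono_word v l v' l' :
  mono_gens l l' <> [::] -> wseq (mono_word v l v' l') = mono_gens l l'.
Proof. by rewrite /mono_word -/(mono_gens l l'); case: (mono_gens l l'). Qed.

Lemma mono_gens_star l l' : rev (map gstar (mono_gens l l')) = mono_gens l' l.
Proof. by rewrite /mono_gens map_cat rev_cat -!map_comp !map_rev revK. Qed.

Lemma wstar_mono_word v l v' l' : path_rng rng v l = path_rng rng v' l' ->
  wstar (mono_word v l v' l') = mono_word v' l' v l.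
Proof.
case E: (mono_gens l l') => [|h t].
  move: E => /(congr1 size)/eqP; rewrite size_cat !size_map size_rev addn_eq0.
  by case/andP=> /nilP -> /nilP -> /= ->.
move=> _; apply: wseq_inj.
have nil : mono_gens l l' <> [::] by rewrite E.
have nil' : mono_gens l' l <> [::].
  by rewrite -mono_gens_star E /= rev_cons => /(congr1 size); rewrite size_rcons.
by rewrite wseq_wstar !wseq_mono_word // mono_gens_star.
Qed.

Lemma weq_mono_word v l v' l' :
  path_pair v l v' l' -> weq (Gv v, mono_gens l l') (mono_word v l v' l').
Proof.
move=> pp; rewrite /mono_word -/(mono_gens l l').
case E: (mono_gens l l') => [|h t]; first exact: weq_refl.
by rewrite -(mono_gens_head pp E); apply: (weq_cats t (weq_vertexl h)).
Qed.

Definition reduces w : Prop :=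
  wzero w \/ exists v l v' l', path_pair v l v' l' /\ weq w (Gv v, mono_gens l l').

Lemma reduces_weq u w : weq u w -> reduces w -> reduces u.
Proof.
move=> uw [w0|[v [l [v' [l' [pp wm]]]]]]; first by left; apply: wzero_weq uw w0.
by right; exists v, l, v', l'; split=> //; apply: weq_trans uw wm.
Qed.

Lemma reduces_step g v l v' l' :
  path_pair v l v' l' -> reduces (g, Gv v :: mono_gens l l').
Proof.
move=> pp; have [gv|gv] := excluded_middle_informative (grng g = v); last first.
  by left; apply: (wzero_cats (mono_gens l l') (@wzero_mismatch g (Gv v) gv)).
subst v; apply: (reduces_weq (weq_cats (mono_gens l l') (weq_vertexr g))) => /=.
case: g pp => [u|b|b] /= pp.
- by right; exists u, l, v', l'; split=> //; apply: weq_refl.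
- right; exists (src b), (b :: l), v', l'; split.
    by case: pp => vl v'l' vv'; split.
  exact/weq_sym/(weq_cats _ (weq_vertexl (Ge b))).
case: l pp => [|a l] [vl v'l' vv'] /=.
  right; exists (rng b), [::], v', (rcons l' b); split.
    by split; rewrite ?path_rng_rcons // path_from_rcons -vv'.
  by rewrite /mono_gens rev_rcons; apply/weq_sym/(weq_cats _ (weq_vertexl (Gs b))).
have [ba|ba] := excluded_middle_informative (b = a); last first.
  by left; apply: (@wzero_cats (Gs b) [:: Ge a] (mono_gens l l')); apply/wzero_rel/rel_ce'.
subst a; right; exists (rng b), l, v', l'; split; first by case: vl => _ ?; split.
by apply: (@weq_cats (Gs b) [:: Ge b] _ [::] (mono_gens l l')); apply/weq_rel/rel_ce.
Qed.

Lemma word_reduces w : reduces w.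
Proof.
case: w => g s; elim: s g => [|h t IH] g.
  right; case: g => [v|a|a].
  - by exists v, [::], v, [::]; split; last apply: weq_refl.
  - by exists (src a), [:: a], (rng a), [::]; split; last apply/weq_sym/(weq_vertexl (Ge a)).
  - by exists (rng a), [::], (src a), [:: a]; split; last apply/weq_sym/(weq_vertexl (Gs a)).
case: (IH h) => [ht0|[v [l [v' [l' [pp e]]]]]]; first by left; apply: (wzero_catl (g, [::]) ht0).
by apply: (reduces_weq (weq_catl (g, [::]) e)); apply: reduces_step pp.
Qed.

End Words.

Section Weights.
Variables (V Ed : Type) (src rng : Ed -> V) (R : pzRingType) (X : V -> Prop).
Variables (I G : Type) (gG : group_on G) (wv : V -> I * G * I) (we : Ed -> I * G * I).
Hypothesis wmap : weight_mapping src rng gG wv we.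
Local Notation B := (I * G * I)%type.
Local Notation gen := (gen V Ed).
Local Notation word := (word V Ed).
Local Notation F := (fsum V Ed R).
Local Notation bmul := (bmul gG).
Local Notation binv := (binv gG).
Local Notation sinv := (sinv gG).
Local Notation gsrc := (gsrc src rng).
Local Notation grng := (grng src rng).
Local Notation ideal := (@cideal V Ed src rng R X).
Local Notation "x =C y" := (@ceq V Ed src rng R X x y) (at level 70).
Local Notation path_pair := (path_pair src rng).
Local Notation mono_gens := (mono_gens V).
Local Notation weq := (@weq V Ed src rng R X).
Local Notation wzero := (@wzero V Ed src rng R X).
Local Notation wpath := (wpath gG wv we).
Local Notation wmono := (wmono gG wv we).
Local Notation comp := (@Defs.comp V Ed src rng R X I G gG wv we).
Local Notation span_w := (@span_w V Ed src rng R I G gG wv we).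
Implicit Types (g h : gen) (hs : seq gen) (u w : word) (x y z : F) (P : option B -> Prop).
Implicit Types (v : V) (a : Ed) (l : seq Ed) (s : B) (t : option B).

Definition gweight g : B :=
  match g with Gv v => wv v | Ge a => we a | Gs a => sinv (we a) end.

Local Notation Gv := (@Gv V Ed).
Local Notation Ge := (@Ge V Ed).
Local Notation Gs := (@Gs V Ed).

Definition wweight w : option B :=
  foldl (fun acc h => bmul acc (Some (gweight h))) (Some (gweight w.1)) w.2.

Lemma wweight_cat u w : wweight (wcat u w) = bmul (wweight u) (wweight w).
Proof.
have foldl_bmul c d hs : foldl (fun acc h => bmul acc (Some (gweight h))) (bmul c d) hs =
    bmul c (foldl (fun acc h => bmul acc (Some (gweight h))) d hs).
  by elim: hs c d => //= h hs IH c d; rewrite bmulA IH.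
by rewrite /wweight foldl_cat /= foldl_bmul.
Qed.

Lemma wv_idem v : bmul (Some (wv v)) (Some (wv v)) = Some (wv v).
Proof. by case: wmap => idem _; apply: idem. Qed.

Lemma sinv_wv v : sinv (wv v) = wv v.
Proof. exact/bmul_idem_sinv/wv_idem. Qed.

Lemma gweight_vertexl g : bmul (Some (wv (gsrc g))) (Some (gweight g)) = Some (gweight g).
Proof.
case: wmap => _ wa; case: g => [v|a|a] /=; first exact: wv_idem; first by case: (wa a).
by rewrite -binv_Some -(sinv_wv (rng a)) -binv_Some -binvM; case: (wa a) => _ ->.
Qed.

Lemma gweight_vertexr g : bmul (Some (gweight g)) (Some (wv (grng g))) = Some (gweight g).
Proof.
case: wmap => _ wa; case: g => [v|a|a] /=; first exact: wv_idem; first by case: (wa a).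
by rewrite -binv_Some -(sinv_wv (src a)) -binv_Some -binvM; case: (wa a) => ->.
Qed.

Lemma gweight_star g : gweight (gstar g) = sinv (gweight g).
Proof. by case: g => [v|a|a] /=; rewrite ?sinv_wv ?sinvK. Qed.

Lemma wweight_wstar w : wweight (wstar w) = binv (wweight w).
Proof.
case: w => g s; elim/last_ind: s => [|s h IH]; first by rewrite /wweight binv_Some /= gweight_star.
have -> : (g, rcons s h) = wcat (g, s) (h, [::]) by rewrite /wcat -cats1.
by rewrite wstar_cat !wweight_cat IH binvM {2}/wweight binv_Some /wweight /= gweight_star.
Qed.

Lemma wweight_rcons g hs h : wweight (g, rcons hs h) = bmul (wweight (g, hs)) (Some (gweight h)).
Proof. by rewrite /wweight /= -cats1 foldl_cat. Qed.

Lemma wweight_vertexr g hs :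
  bmul (wweight (g, hs)) (Some (wv (grng (last g hs)))) = wweight (g, hs).
Proof.
case/lastP: hs => [|hs h]; first exact: gweight_vertexr.
by rewrite last_rcons wweight_rcons bmulA gweight_vertexr.
Qed.

Lemma wweight_vertexl g hs : bmul (Some (wv (gsrc g))) (wweight (g, hs)) = wweight (g, hs).
Proof.
case: hs => [|h hs]; first exact: gweight_vertexl.
by rewrite -[(g, h :: hs)]/(wcat (g, [::]) (h, hs)) wweight_cat -bmulA gweight_vertexl.
Qed.

Definition of_weight t x : Prop := List.Forall (fun p => wweight p.2 = t) x.

Lemma crel_of_weight x : crel src rng X x -> exists t, of_weight t x.
Proof.
have pair (r r' : R) u w : wweight u = wweight w -> of_weight (wweight w) [:: (r, u); (r', w)].
  by move=> uw; do !constructor.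
case=> [v|v v' _|a|a|a|a|a|a a' _|v l _ _ srcl];
  try by eexists; do !constructor.
- by eexists; apply: pair; rewrite /wweight /= wv_idem.
- by eexists; apply: pair; rewrite /wweight /= (gweight_vertexl (Ge a)).
- by eexists; apply: pair; rewrite /wweight /= (gweight_vertexr (Ge a)).
- by eexists; apply: pair; rewrite /wweight /= (gweight_vertexl (Gs a)).
- by eexists; apply: pair; rewrite /wweight /= (gweight_vertexr (Gs a)).
- by eexists; apply: pair; rewrite /wweight /= (bmul_sinvl (gweight_vertexr (Ge a))).
- exists (Some (wv v)); apply/List.Forall_app; split; last by constructor.
  apply/List.Forall_forall => _ /List.in_map_iff [a [<- /srcl <-]].
  by rewrite /wweight /= (bmul_sinvr (gweight_vertexl (Ge a))).
Qed.

Definition wsel P x : F := [seq p <- x | asbool (P (wweight p.2))].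

Lemma coef_wsel P x w : coef (wsel P x) w = if asbool (P (wweight w)) then coef x w else 0.
Proof.
rewrite /coef big_filter big_mkcond /=; case: asboolP => Pw; last rewrite big1 //.
  apply: eq_bigr => p _; case: excluded_middle_informative => [pw|npw] /=; last by case: ifP.
  by move: Pw; rewrite -pw => /asboolP ->.
move=> p _; case: excluded_middle_informative => [pw|npw] /=; last by case: ifP.
by case: asboolP => // Pp; rewrite pw in Pp.
Qed.

Lemma wsel_cat P x y : wsel P (x ++ y) = wsel P x ++ wsel P y.
Proof. exact: filter_cat. Qed.

Lemma wsel_of_weight P t x : of_weight t x -> wsel P x = if asbool (P t) then x else [::].
Proof.
elim=> [|p y ps _ IH]; first by case: ifP.
by rewrite /wsel /= -/(wsel P y) IH ps; case: (asbool _).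
Qed.

Lemma cideal_wsel x : ideal x -> forall P, ideal (wsel P x).
Proof.
move: x; apply: (@cideal_ind1 _ _ src rng R X (fun x => forall P, ideal (wsel P x))).
- move=> x /[dup] /crel_of_weight [t /wsel_of_weight xt] x_rel P.
  by rewrite xt; case: ifP => _; [apply: ci_rel | apply: ci_nil].
- by move=> P; apply: ci_nil.
- by move=> x y Ix Iy P; rewrite wsel_cat; apply: ci_add (Ix P) (Iy P).
- move=> p y Iy P; have := ci_lmul [:: p] (Iy (fun t => P (bmul (wweight p.2) t))).
  rewrite /wsel !fmul1l filter_map; congr (cideal _ _ _ (map _ _)).
  by apply: eq_filter => q; rewrite /= wweight_cat.
- move=> x q Ix P; have := ci_rmul [:: q] (Ix (fun t => P (bmul t (wweight q.2)))).
  rewrite /wsel !fmul1r filter_map; congr (cideal _ _ _ (map _ _)).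
  by apply: eq_filter => p; rewrite /= wweight_cat.
- by move=> r x Ix P; rewrite /wsel filter_map; apply: ci_lsc (Ix P).
- by move=> r x Ix P; rewrite /wsel filter_map; apply: ci_rsc (Ix P).
- by move=> x y xy Ix P; apply: (cideal_coef (Ix P)) => w; rewrite !coef_wsel xy.
Qed.

Lemma wweight_path_Some g l :
  path_from src rng (grng g) l -> exists m, wweight (g, map Ge l) = Some m.
Proof.
elim: l g => [|a l IH] g /=; first by exists (gweight g).
case=> ga /(IH (Ge a)) [y ay].
rewrite -[(g, _ :: _)]/(wcat (g, [::]) (Ge a, map Ge l)) wweight_cat ay.
apply: (bmul_Some (gweight_vertexr g)); rewrite -ga -ay.
exact: (wweight_vertexl (Ge a)).
Qed.

Lemma wpath_wweight v l : path_from src rng v l -> wpath v l = wweight (Gv v, map Ge l).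
Proof.
case: l => [|a l] //= [av _]; rewrite /wweight /= -av (gweight_vertexl (Ge a)).
by elim: l (Some _) => //= b l IH m.
Qed.

Lemma wweight_mono_gens v l v' l' :
  path_pair v l v' l' -> wweight (Gv v, mono_gens l l') = wmono v l v' l'.
Proof.
move=> pp; case: (pp) => vl v'l' _.
rewrite /wmono (wpath_wweight vl) (wpath_wweight v'l') -wweight_wstar -wweight_cat.
have -> : wcat (Gv v, map Ge l) (wstar (Gv v', map Ge l')) = (Gv v, rcons (mono_gens l l') (Gv v')).
  by apply: wseq_inj; rewrite wseq_wcat wseq_wstar /= -map_comp rev_cons -map_rev -rcons_cat.
by rewrite wweight_rcons /= -(mono_gens_last pp) wweight_vertexr.
Qed.

Lemma wweight_mono_word v l v' l' :
  path_pair v l v' l' -> wweight (mono_word v l v' l') = wweight (Gv v, mono_gens l l').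
Proof.
move=> pp; rewrite /mono_word -/(mono_gens l l').
case E: (mono_gens l l') => [|h t] //; rewrite -(mono_gens_head pp E).
by rewrite -[(Gv _, h :: t)]/(wcat (Gv (gsrc h), [::]) (h, t)) wweight_cat wweight_vertexl.
Qed.

Lemma wmono_Some v l v' l' : path_pair v l v' l' -> exists s, wmono v l v' l' = Some s.
Proof.
case=> vl v'l' vv'; rewrite /wmono (wpath_wweight vl) (wpath_wweight v'l').
have [m vm] := wweight_path_Some (g := Gv v) vl.
have [m' vm'] := wweight_path_Some (g := Gv v') v'l'.
have := wweight_vertexr (Gv v) (map Ge l); have := wweight_vertexr (Gv v') (map Ge l').
rewrite vm vm' !grng_last_path binv_Some -vv' => m'w mw.
apply: (bmul_Some mw); rewrite -(sinv_wv (path_rng rng v l)) -!binv_Some -binvM.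
by rewrite m'w.
Qed.

Lemma wzero_weq_weight u w : weq u w -> wweight u <> wweight w -> wzero u.
Proof.
move=> /cideal_wsel /(_ (fun t => t = wweight u)); rewrite /wsel /=.
by case: asboolP => // _; case: asboolP => // /esym.
Qed.

Lemma word_zero_or_monomial w : wzero w \/ exists v l v' l' s,
  [/\ path_pair v l v' l', weq w (mono_word v l v' l'),
      wweight w = Some s & wmono v l v' l' = Some s].
Proof.
case: (word_reduces src rng R X w) => [|[v [l [v' [l' [pp wm]]]]]]; first by left.
have wm' := weq_trans wm (weq_mono_word R X pp).
have [s ms] := wmono_Some pp.
have [ws|] := excluded_middle_informative (wweight w = Some s); last first.
  move=> ws; left; apply: (wzero_weq_weight wm').
  by rewrite (wweight_mono_word pp) (wweight_mono_gens pp) ms.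
by right; exists v, l, v', l', s.
Qed.

Lemma comp_nil t : comp t [::].
Proof. by case: t => [s|]; [exists [::]; split; [constructor | apply: ceq_refl] | apply: ci_nil].
Qed.

Lemma comp_ceq t x y : x =C y -> comp t y -> comp t x.
Proof.
case: t => [s|] xy; last exact: cideal_ceq.
by case=> z [sz yz]; exists z; split=> //; apply: ceq_trans xy yz.
Qed.

Lemma comp_cat t x y : comp t x -> comp t y -> comp t (x ++ y).
Proof.
case: t => [s [x' [sx' xx']] [y' [sy' yy']]|]; last exact: ci_add.
by exists (x' ++ y'); split; [apply/List.Forall_app | apply: ceq_cat].
Qed.

Lemma comp_opp t x : comp t x -> comp t (fscale_l (-1) x).
Proof.
case: t => [s [x' [sx' xx']]|]; last exact: ci_lsc.
by exists (fscale_l (-1) x'); split; [elim: sx' => /= *; constructor | apply: ceq_scale_l].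
Qed.

Lemma span_w_single s r v l v' l' : path_pair v l v' l' -> wmono v l v' l' = Some s ->
  span_w s [:: (r, mono_word v l v' l')].
Proof. by case=> vl v'l' vv' ms; constructor=> //; exists v, l, v', l'. Qed.

Lemma comp_ideal t x : ideal x -> comp t x.
Proof. by case: t => [s|] // Ix; exists [::]; split; [constructor | apply/ceq0]. Qed.

Lemma comp_of_weight t z : of_weight t z -> comp t z.
Proof.
elim=> [|[r w] z' /= wt _ IH]; first exact: comp_nil.
rewrite -cat1s; apply: comp_cat IH.
case: (word_zero_or_monomial w) => [w0|[v [l [v' [l' [s [pp wm ws ms]]]]]]].
  exact/comp_ideal/wzero_scale.
rewrite -wt ws; exists [:: (r, mono_word v l v' l')]; split; first exact: span_w_single.
exact: weq_scale.
Qed.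

Lemma span_w_of_weight s y : span_w s y -> of_weight (Some s) y.
Proof.
elim=> [|p y' [v [l [v' [l' [vl [v'l' [vv' [pm ms]]]]]]]] _ IH]; constructor=> //.
have pp : path_pair v l v' l' by [].
by rewrite pm (wweight_mono_word pp) (wweight_mono_gens pp).
Qed.

Lemma comp_span x : exists l : seq (B * F),
  List.Forall (fun p => comp (Some p.1) p.2) l /\ x =C flatten [seq p.2 | p <- l].
Proof.
elim: x => [|[r w] x [l [lc xl]]]; first by exists [::]; split; [constructor | apply: ceq_refl].
rewrite -cat1s; case: (word_zero_or_monomial w) => [w0|[v [l1 [v' [l' [s [pp wm ws ms]]]]]]].
  by exists l; split=> //; rewrite -[flatten _]cat0s; apply: ceq_cat => //; apply/ceq0/wzero_scale.
exists ((s, [:: (r, w)]) :: l); split; last exact: (ceq_cat (ceq_refl src rng X [:: (r, w)]) xl).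
constructor=> //; exists [:: (r, mono_word v l1 v' l')]; split; first exact: span_w_single.
exact: weq_scale.
Qed.

Lemma of_weight_fmul t t' x y : of_weight t x -> of_weight t' y -> of_weight (bmul t t') (fmul x y).
Proof.
move=> + yt; elim=> [|p x' pt _ IH]; first by constructor.
rewrite fmul_consl fmul1l; apply/List.Forall_app; split=> //.
by elim: yt => [|q y' qt _ IHy]; constructor=> //=; rewrite wweight_cat pt qt.
Qed.

Lemma comp_fmul t t' x y : comp t x -> comp t' y -> comp (bmul t t') (fmul x y).
Proof.
case: t t' => [s|] [s'|] cx cy; last exact: ci_rmul; last exact: ci_rmul.
  case: cx cy => [x' [sx' xx']] [y' [sy' yy']]; apply: comp_ceq (ceq_fmul xx' yy') _.
  by apply/comp_of_weight/of_weight_fmul; apply: span_w_of_weight.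
by rewrite bmul0r; apply: ci_lmul.
Qed.

Lemma wsel_flatten_notin (l : seq (B * F)) k :
  List.Forall (fun q => of_weight (Some q.1) q.2) l -> ~ List.In k [seq q.1 | q <- l] ->
  wsel (fun t => t = Some k) (flatten [seq q.2 | q <- l]) = [::].
Proof.
elim=> [|q l' qw _ IH] //= kl.
rewrite wsel_cat IH ?(wsel_of_weight _ qw); last by move=> kl'; apply: kl; right.
by case: asboolP => // -[qk]; case: kl; left.
Qed.

Lemma wsel_flatten (l : seq (B * F)) p :
  List.NoDup [seq q.1 | q <- l] -> List.Forall (fun q => of_weight (Some q.1) q.2) l ->
  List.In p l -> wsel (fun t => t = Some p.1) (flatten [seq q.2 | q <- l]) = p.2.
Proof.
elim: l => [|q l IH] //= /List.NoDup_cons_iff [ql nd] /List.Forall_cons_iff [qw lw] pl.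
rewrite wsel_cat (wsel_of_weight _ qw).
case: pl => [<-|pl]; first by rewrite wsel_flatten_notin // cats0; case: asboolP.
rewrite IH //; case: asboolP => // -[qp]; case: ql.
by rewrite qp; apply: List.in_map.
Qed.

Lemma comp_representatives (l : seq (B * F)) :
  List.Forall (fun p => comp (Some p.1) p.2) l -> exists l' : seq (B * F),
    List.Forall2 (fun p q => p.1 = q.1 /\ p.2 =C q.2) l l' /\
    List.Forall (fun q => span_w q.1 q.2) l'.
Proof.
elim=> [|p l0 [y [sy py]] _ [l' [ll' l's]]]; first by exists [::]; split; constructor.
by exists ((p.1, y) :: l'); split; constructor.
Qed.

Lemma comp_direct (l : seq (B * F)) :
  List.NoDup [seq p.1 | p <- l] -> List.Forall (fun p => comp (Some p.1) p.2) l ->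
  ideal (flatten [seq p.2 | p <- l]) -> List.Forall (fun p => ideal p.2) l.
Proof.
move=> nd /comp_representatives [l' [ll' l's]] Il.
have keys : [seq q.1 | q <- l'] = [seq p.1 | p <- l].
  by elim: ll' => //= p q l0 l1 [-> _] _ ->.
have Il' : ideal (flatten [seq q.2 | q <- l']).
  apply: cideal_ceq Il; apply: ceq_sym.
  by elim: ll' => [|p q l0 l1 [_ pq] _ IH] /=; [apply: ceq_refl | apply: ceq_cat].
have l'w : List.Forall (fun q => of_weight (Some q.1) q.2) l'.
  by apply: List.Forall_impl l's => q; apply: span_w_of_weight.
have l'I : List.Forall (fun q => ideal q.2) l'.
  apply/List.Forall_forall => q ql'; rewrite -(wsel_flatten _ l'w ql') ?keys //.
  exact: cideal_wsel.
elim: ll' l'I => [|p q l0 l1 [_ pq] _ IH] // /List.Forall_cons_iff [Iq l1I].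
by constructor; [apply: cideal_ceq pq Iq | apply: IH].
Qed.

Lemma comp_graded_ring : graded_ring_inducing src rng R X gG wv we.
Proof.
split; [|split; [|split]].
- by move=> t; split; [apply: comp_nil | split; [apply: comp_cat | apply: comp_opp]].
- exact: comp_span.
- exact: comp_direct.
- by move=> t t' x y; apply: comp_fmul.
Qed.

Lemma wmono_swap v l v' l' : wmono v' l' v l = binv (wmono v l v' l').
Proof. by rewrite /wmono binvM binvK. Qed.

Lemma span_w_fstar s y : span_w s y -> span_w (sinv s) (fstar y).
Proof.
elim=> [|p y' [v [l [v' [l' [vl [v'l' [vv' [pm ms]]]]]]]] _ IH]; constructor=> //.
exists v', l', v, l; do !split=> //; first by rewrite /= pm (wstar_mono_word vv').
by rewrite wmono_swap ms binv_Some.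
Qed.

Lemma comp_fstar t x : comp t x -> comp (binv t) (fstar x).
Proof.
case: t => [s [y [sy xy]]|]; last exact: cideal_fstar.
by rewrite binv_Some; exists (fstar y); split; [apply: span_w_fstar | apply: ceq_fstar].
Qed.

Lemma fstar_anti_graded_involution : has_anti_graded_involution src rng R X gG wv we.
Proof.
exists (@fstar V Ed R); split; [|split; [|split]].
- by move=> x y; apply: ceq_fstar.
- by move=> x; rewrite fstarK; apply: ceq_refl.
- exact: comp_fstar.
- move=> t x cx; exists (fstar x); split; last by rewrite fstarK; apply: ceq_refl.
  by rewrite -(binvK gG t); apply: comp_fstar.
Qed.

End Weights.

Theorem proposition3p5 (R : pzRingType) (V Ed : Type) (src rng : Ed -> V)
    (X : V -> Prop) (I G : Type) (gG : group_on G)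
    (wv : V -> I * G * I) (we : Ed -> I * G * I) :
  (forall v, X v -> regular src v) ->
  weight_mapping src rng gG wv we ->
  (graded_ring_inducing src rng R X gG wv we /\
   has_anti_graded_involution src rng R X gG wv we) /\
  (graded_ring_inducing src rng R (regular src) gG wv we /\
   has_anti_graded_involution src rng R (regular src) gG wv we).
Proof.
(* Homogeneity of the relations does not depend on X. *)
move=> _ wmap.
by split; split; first [apply: comp_graded_ring | apply: fstar_anti_graded_involution].
Qed.
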